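(* Let $\mathbb{T}$ be a geometric theory over $\Sigma$. The topological groupoid $\mathbf{M}_{\mathbb{T}}=(I_{\mathbb{T}}\rightrightarrows M_{\mathbb{T}})$ of $\mathbb{S}$-indexed $\mathbb{T}$-models and isomorphisms is an open topological groupoid, i.e.\ the domain and codomain maps $d,c:I_{\mathbb{T}}\to M_{\mathbb{T}}$ are open maps.
   Context: Let $\Sigma$ be a single-sorted first-order signature with equality, $\kappa\geq|\Sigma|+\aleph_0$ an infinite cardinal, and $\mathbb{S}$ a fixed set of cardinality at least $\kappa$. An $\mathbb{S}$-indexed $\Sigma$-structure is one whose underlying set is a quotient $A/{\sim}$ of a subset $A\subseteq\mathbb{S}$ (elements $[a]$). $M_\Sigma$ is the set of all such structures and $I_\Sigma$ the set of all isomorphisms between them, with domain and codomain maps $d,c$. The logical topology on $M_\Sigma$ is the coarsest containing the sets $\{\mathbf{M}:[a]\in\mathbf{M}\}$ ($a\in\mathbb{S}$), $\{\mathbf{M}:[\mathbf{a}]\in R^{\mathbf{M}}\}$ (each $n$-ary relation symbol $R$ including equality and nullary symbols, $\mathbf{a}$ an $n$-tuple from $\mathbb{S}$), and $\{\mathbf{M}:f^{\mathbf{M}}([\mathbf{a}])=[b]\}$ (each function symbol $f$). The logical topology on $I_\Sigma$ is the coarsest making $d,c$ continuous and containing all $\{\mathbf{f}:[a]\in d(\mathbf{f}),[b]\in c(\mathbf{f}),\mathbf{f}([a])=[b]\}$. $M_{\mathbb{T}}\subseteq M_\Sigma$ is the set of $\mathbb{S}$-indexed $\mathbb{T}$-models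 and $I_{\mathbb{T}}\subseteq I_\Sigma$ the isomorphisms between them, with subspace topologies, forming a topological groupoid with composition, identities and inverses. *)

From Stdlib Require Import List Vectors.Fin.

Unset Implicit Arguments.
Unset Strict Implicit.

(* A single-sorted first-order signature (equality is built in). *)
Record signature := Signature {
  Rel : Type; rar : Rel -> nat;
  Fun : Type; far : Fun -> nat
}.

Definition injective {X Y : Type} (e : X -> Y) : Prop :=
  forall x y, e x = e y -> x = y.

Section Syntax.
Variable Σ : signature.

Inductive term : Type :=
| tvar : nat -> term
| tapp : forall f : Fun Σ, (Fin.t (far Σ f) -> term) -> term.

Inductive gformula : Type :=
| gtop : gformula
| geq : term -> term -> gformula
| grel : forall R : Rel Σ, (Fin.t (rar Σ R) -> term) -> gformula
| gand : gformula -> gformula -> gformula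
| gdisj : forall J : Type, (J -> gformula) -> gformula
| gex : nat -> gformula -> gformula.

Record gsequent := GSequent { sctx : list nat; shyp : gformula; sconcl : gformula }.

Fixpoint tfree (t : term) (x : nat) : Prop :=
  match t with
  | tvar n => n = x
  | tapp f ts => exists i, tfree (ts i) x
  end.

Fixpoint ffree (φ : gformula) (x : nat) : Prop :=
  match φ with
  | gtop => False
  | geq t u => tfree t x \/ tfree u x
  | grel R ts => exists i, tfree (ts i) x
  | gand φ ψ => ffree φ x \/ ffree ψ x
  | gdisj J φs => exists i, ffree (φs i) x
  | gex y φ => y <> x /\ ffree φ x
  end.

Definition geometric_theory (T : gsequent -> Prop) : Prop :=
  forall σ, T σ -> forall x, ffree (shyp σ) x \/ ffree (sconcl σ) x -> In x (sctx σ).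

End Syntax.

Arguments tvar {Σ}.
Arguments tapp {Σ}.
Arguments gtop {Σ}.
Arguments geq {Σ}.
Arguments grel {Σ}.
Arguments gand {Σ}.
Arguments gdisj {Σ}.
Arguments gex {Σ}.
Arguments sctx {Σ}.
Arguments shyp {Σ}.
Arguments sconcl {Σ}.
Arguments geometric_theory {Σ}.

Section Structures.
Variables (Σ : signature) (S : Type).

(* An S-indexed Σ-structure with underlying set A/~ (A ⊆ S).  Relations and
   (graphs of) functions on the quotient are encoded as ~-invariant
   predicates on representatives:  srel R a  iff [a] ∈ R^M,
   sfun f a b iff f^M([a]) = [b].  This encoding is bijective. *)
Record structure := Structure {
  sdom : S -> Prop;
  seqv : S -> S -> Prop;
  srel : forall R : Rel Σ, (Fin.t (rar Σ R) -> S) -> Prop;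
  sfun : forall f : Fun Σ, (Fin.t (far Σ f) -> S) -> S -> Prop;
  seqv_dom : forall a b, seqv a b -> sdom a /\ sdom b;
  seqv_refl : forall a, sdom a -> seqv a a;
  seqv_sym : forall a b, seqv a b -> seqv b a;
  seqv_trans : forall a b c, seqv a b -> seqv b c -> seqv a c;
  srel_dom : forall R a, srel R a -> forall i, sdom (a i);
  srel_inv : forall R a b, (forall i, seqv (a i) (b i)) -> srel R a -> srel R b;
  sfun_dom : forall f a b, sfun f a b -> (forall i, sdom (a i)) /\ sdom b;
  sfun_inv : forall f a a' b b', (forall i, seqv (a i) (a' i)) -> seqv b b' ->
               sfun f a b -> sfun f a' b';
  sfun_tot : forall f a, (forall i, sdom (a i)) -> exists b, sfun f a b;
  sfun_fun : forall f a b b', sfun f a b -> sfun f a b' -> seqv b b'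
}.

(* Isomorphisms M -> N; imap a b  iff  f([a]) = [b]. *)
Record iso := Iso {
  idom : structure;
  icod : structure;
  imap : S -> S -> Prop;
  imap_dom : forall a b, imap a b -> sdom idom a /\ sdom icod b;
  imap_inv : forall a a' b b', seqv idom a a' -> seqv icod b b' -> imap a b -> imap a' b';
  imap_tot : forall a, sdom idom a -> exists b, imap a b;
  imap_fun : forall a b b', imap a b -> imap a b' -> seqv icod b b';
  imap_inj : forall a a' b, imap a b -> imap a' b -> seqv idom a a';
  imap_sur : forall b, sdom icod b -> exists a, imap a b;
  imap_rel : forall R a b, (forall i, imap (a i) (b i)) ->
               (srel idom R a <-> srel icod R b);
  imap_fn : forall f a b x y, (forall i, imap (a i) (b i)) ->
               sfun idom f a x -> sfun icod f b y -> imap x y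
}.

Definition upd (v : nat -> S) (x : nat) (a : S) : nat -> S :=
  fun y => if Nat.eqb y x then a else v y.

(* teval M v t b  iff  [[t]]^M_v = [b] *)
Fixpoint teval (M : structure) (v : nat -> S) (t : term Σ) (b : S) : Prop :=
  match t with
  | tvar n => seqv M (v n) b
  | tapp f ts => exists a, (forall i, teval M v (ts i) (a i)) /\ sfun M f a b
  end.

Fixpoint sat (M : structure) (v : nat -> S) (φ : gformula Σ) : Prop :=
  match φ with
  | gtop => True
  | geq t u => exists b, teval M v t b /\ teval M v u b
  | grel R ts => exists a, (forall i, teval M v (ts i) (a i)) /\ srel M R a
  | gand φ ψ => sat M v φ /\ sat M v ψ
  | gdisj J φs => exists i, sat M v (φs i)
  | gex x φ => exists a, sdom M a /\ sat M (upd v x a) φ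
  end.

Definition sat_seq (M : structure) (σ : gsequent Σ) : Prop :=
  forall v : nat -> S, (forall x, In x (sctx σ) -> sdom M (v x)) ->
    sat M v (shyp σ) -> sat M v (sconcl σ).

Definition is_model (T : gsequent Σ -> Prop) (M : structure) : Prop :=
  forall σ, T σ -> sat_seq M σ.

Definition generated_open {X : Type} (B : (X -> Prop) -> Prop) (U : X -> Prop) : Prop :=
  forall x, U x -> exists l : list (X -> Prop),
    (forall V, In V l -> B V) /\ (forall V, In V l -> V x) /\
    (forall y, (forall V, In V l -> V y) -> U y).

Inductive M_subbasic : (structure -> Prop) -> Prop :=
| msb_elem : forall a : S, M_subbasic (fun M => sdom M a)
| msb_rel : forall (R : Rel Σ) (a : Fin.t (rar Σ R) -> S),
    M_subbasic (fun M => srel M R a)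
| msb_eq : forall a b : S, M_subbasic (fun M => sdom M a /\ sdom M b /\ seqv M a b)
| msb_fun : forall (f : Fun Σ) (a : Fin.t (far Σ f) -> S) (b : S),
    M_subbasic (fun M => sfun M f a b).

Definition M_open : (structure -> Prop) -> Prop := generated_open M_subbasic.

(* subbasis of the logical topology on I_Σ: coarsest making d, c continuous
   and containing the sets {f : [a] ∈ d f, [b] ∈ c f, f([a]) = [b]} *)
Inductive I_subbasic : (iso -> Prop) -> Prop :=
| isb_dom : forall U, M_open U -> I_subbasic (fun f => U (idom f))
| isb_cod : forall U, M_open U -> I_subbasic (fun f => U (icod f))
| isb_map : forall a b : S,
    I_subbasic (fun f => sdom (idom f) a /\ sdom (icod f) b /\ imap f a b).

Definition I_open : (iso -> Prop) -> Prop := generated_open I_subbasic.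

Definition MT (T : gsequent Σ -> Prop) := { M : structure | is_model T M }.
Definition IT (T : gsequent Σ -> Prop) :=
  { f : iso | is_model T (idom f) /\ is_model T (icod f) }.

Definition dT {T : gsequent Σ -> Prop} (f : IT T) : MT T :=
  exist _ (idom (proj1_sig f)) (proj1 (proj2_sig f)).
Definition cT {T : gsequent Σ -> Prop} (f : IT T) : MT T :=
  exist _ (icod (proj1_sig f)) (proj2 (proj2_sig f)).

Definition MT_open {T} (U : MT T -> Prop) : Prop :=
  exists V, M_open V /\ forall M : MT T, U M <-> V (proj1_sig M).
Definition IT_open {T} (U : IT T -> Prop) : Prop :=
  exists V, I_open V /\ forall f : IT T, U f <-> V (proj1_sig f).

Definition open_map {T} (g : IT T -> MT T) : Prop :=
  forall U : IT T -> Prop, IT_open U -> MT_open (fun M => exists f, U f /\ g f = M).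

End Structures.

Arguments dT {Σ S T}.
Arguments cT {Σ S T}.
Arguments open_map {Σ S T}.
Arguments MT_open {Σ S T}.
Arguments IT_open {Σ S T}.

(* Since geometric satisfaction is invariant under isomorphism, the image of an open set of
   isomorphisms under d consists of the domains M of isomorphisms f in it, and it suffices to
   find, around d(f0), a basic open set of such domains.  A basic open neighbourhood of f0 is
   described by finitely many subbasic conditions on the domain together with finitely many
   prescribed values f(a) = b: conditions on the codomain are pulled back along f0 to
   conditions on the domain plus prescribed values.  If a structure M satisfies these domain
   conditions and identifies a with a' whenever both are prescribed the same value, then M can
   be renamed into an isomorphic S-indexed structure sending each labelled a to its b and
   every other element injectively to a name outside the finitely many b's; such names exist
   because S is infinite.  The codomain map is handled through inversion of isomorphisms. *)

From Stdlib Require Import Lia List Classical ClassicalEpsilon ProofIrrelevance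
  FunctionalExtensionality PropExtensionality.
Import ListNotations.

Arguments sdom {Σ S}. Arguments seqv {Σ S}. Arguments srel {Σ S}. Arguments sfun {Σ S}.
Arguments seqv_dom {Σ S}. Arguments seqv_refl {Σ S}. Arguments seqv_sym {Σ S}.
Arguments seqv_trans {Σ S}. Arguments srel_dom {Σ S}. Arguments srel_inv {Σ S}.
Arguments sfun_dom {Σ S}. Arguments sfun_inv {Σ S}. Arguments sfun_tot {Σ S}.
Arguments sfun_fun {Σ S}.
Arguments idom {Σ S}. Arguments icod {Σ S}. Arguments imap {Σ S}.
Arguments imap_dom {Σ S}. Arguments imap_inv {Σ S}. Arguments imap_tot {Σ S}.
Arguments imap_fun {Σ S}. Arguments imap_inj {Σ S}. Arguments imap_sur {Σ S}.
Arguments imap_rel {Σ S}. Arguments imap_fn {Σ S}.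
Arguments teval {Σ S}. Arguments sat {Σ S}.
Arguments is_model {Σ S}. Arguments upd {S}.
Arguments M_subbasic {Σ S}. Arguments I_subbasic {Σ S}.
Arguments M_open {Σ S}. Arguments I_open {Σ S}.

Section Isomorphisms.
Context {Σ : signature} {S : Type}.

Lemma seqv_refl_imap_r (f : iso Σ S) a b : imap f a b -> seqv (icod f) b b.
Proof. intros h. apply seqv_refl, (imap_dom f a b h). Qed.

Definition iso_inv (f : iso Σ S) : iso Σ S.
Proof.
  refine (Iso Σ S (icod f) (idom f) (fun b a => imap f a b) _ _ _ _ _ _ _ _).
  - intros b a h. apply and_comm, (imap_dom f a b h).
  - intros b b' a a' hb ha h. exact (imap_inv f a a' b b' ha hb h).
  - exact (imap_sur f).
  - intros b a a' h h'. exact (imap_inj f a a' b h h').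
  - intros b b' a h h'. exact (imap_fun f a b b' h h').
  - exact (imap_tot f).
  - intros R b a h. symmetry. exact (imap_rel f R a b h).
  - intros g b a y x h hy hx. exact (imap_fn f g a b x y h hx hy).
Defined.

Lemma iso_ext (f g : iso Σ S) :
  idom f = idom g -> icod f = icod g -> imap f = imap g -> f = g.
Proof. destruct f, g; simpl; intros -> -> ->. f_equal; apply proof_irrelevance. Qed.

Lemma iso_inv_involutive (f : iso Σ S) : iso_inv (iso_inv f) = f.
Proof. apply iso_ext; reflexivity. Qed.

Lemma imap_seqv_l (f : iso Σ S) a a' b b' :
  imap f a b -> imap f a' b' -> seqv (idom f) a a' -> seqv (icod f) b b'.
Proof.
  intros hab hab' haa'. apply (imap_fun f a' b b'); [| exact hab'].
  exact (imap_inv f a a' b b haa' (seqv_refl_imap_r f a b hab) hab).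
Qed.

Lemma imap_seqv (f : iso Σ S) a a' b b' :
  imap f a b -> imap f a' b' -> (seqv (idom f) a a' <-> seqv (icod f) b b').
Proof.
  intros hab hab'. split; [exact (imap_seqv_l f a a' b b' hab hab') |].
  exact (imap_seqv_l (iso_inv f) b b' a a' hab hab').
Qed.

Lemma imap_sfun_l (f : iso Σ S) g av bv a b :
  (forall i, imap f (av i) (bv i)) -> imap f a b ->
  sfun (idom f) g av a -> sfun (icod f) g bv b.
Proof.
  intros hv hab hg.
  destruct (sfun_tot (icod f) g bv (fun i => proj2 (imap_dom f _ _ (hv i)))) as [y hy].
  apply (sfun_inv _ g bv bv y b (fun i => seqv_refl_imap_r f _ _ (hv i))); [| exact hy].
  exact (imap_fun f a y b (imap_fn f g av bv a y hv hg hy) hab).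
Qed.

Lemma imap_sfun (f : iso Σ S) g av bv a b :
  (forall i, imap f (av i) (bv i)) -> imap f a b ->
  (sfun (idom f) g av a <-> sfun (icod f) g bv b).
Proof.
  intros hv hab. split; [exact (imap_sfun_l f g av bv a b hv hab) |].
  exact (imap_sfun_l (iso_inv f) g bv av b a hv hab).
Qed.

Lemma teval_dom (M : structure Σ S) v t b : teval M v t b -> sdom M b.
Proof.
  destruct t as [n | g ts]; simpl.
  - intros h. apply (seqv_dom M _ _ h).
  - intros [a [_ h]]. apply (sfun_dom M _ _ _ h).
Qed.

Lemma teval_iso (f : iso Σ S) v w (t : term Σ) :
  (forall x, tfree Σ t x -> imap f (v x) (w x)) ->
  forall b b', teval (idom f) v t b -> imap f b b' -> teval (icod f) w t b'.
Proof.
  induction t as [n | g ts IH]; simpl; intros hvw b b' ht hb.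
  - apply (imap_fun f b (w n) b'); [| exact hb].
    apply (imap_inv f (v n) b (w n) (w n) ht); [| exact (hvw n eq_refl)].
    apply (seqv_refl_imap_r f (v n)), hvw; reflexivity.
  - destruct ht as [a [ha hg]].
    destruct (choice (fun i y => imap f (a i) y)
      (fun i => imap_tot f (a i) (proj1 (sfun_dom _ _ _ _ hg) i))) as [a' ha'].
    destruct (sfun_tot _ g a' (fun i => proj2 (imap_dom f _ _ (ha' i)))) as [y hy].
    exists a'. split.
    + intros i. apply (IH i (fun x hx => hvw x (ex_intro _ i hx)) (a i)); [apply ha | apply ha'].
    + apply (sfun_inv _ g a' a' y b' (fun i => seqv_refl_imap_r f _ _ (ha' i))); [| exact hy].
      exact (imap_fun f b y b' (imap_fn f g a a' b y ha' hg hy) hb).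
Qed.

Lemma upd_imap (f : iso Σ S) v w x a b (P : nat -> Prop) :
  (forall y, y <> x -> P y -> imap f (v y) (w y)) -> imap f a b ->
  forall y, P y -> imap f (upd v x a y) (upd w x b y).
Proof.
  intros hvw hab y hy. unfold upd.
  destruct (PeanoNat.Nat.eqb_spec y x); [exact hab | apply hvw; assumption].
Qed.

Lemma sat_iso (f : iso Σ S) (φ : gformula Σ) : forall v w,
  (forall x, ffree Σ φ x -> imap f (v x) (w x)) -> sat (idom f) v φ -> sat (icod f) w φ.
Proof.
  induction φ as [| t u | R ts | φ IHφ ψ IHψ | J φs IH | x φ IH]; simpl; intros v w hvw h.
  - exact I.
  - destruct h as [b [ht hu]].
    destruct (imap_tot f b (teval_dom _ _ _ _ ht)) as [b' hb].
    exists b'. split.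
    + apply (teval_iso f v w t (fun x hx => hvw x (or_introl hx)) b); assumption.
    + apply (teval_iso f v w u (fun x hx => hvw x (or_intror hx)) b); assumption.
  - destruct h as [a [ha hR]].
    destruct (choice (fun i y => imap f (a i) y)
      (fun i => imap_tot f (a i) (teval_dom _ _ _ _ (ha i)))) as [a' ha'].
    exists a'. split.
    + intros i. apply (teval_iso f v w (ts i) (fun x hx => hvw x (ex_intro _ i hx)) (a i));
        [apply ha | apply ha'].
    + exact (proj1 (imap_rel f R a a' ha') hR).
  - destruct h as [hφ hψ]. split.
    + apply (IHφ v w); auto.
    + apply (IHψ v w); auto.
  - destruct h as [j hj]. exists j. apply (IH j v w); [| exact hj].
    intros x hx. apply hvw. exists j. exact hx.
  - destruct h as [a [ha hφ]].
    destruct (imap_tot f a ha) as [b hb].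
    exists b. split; [exact (proj2 (imap_dom f a b hb)) |].
    apply (IH (upd v x a) (upd w x b)); [| exact hφ].
    apply upd_imap; [| exact hb]. intros y hyx hy. apply hvw. split; congruence.
Qed.

Lemma is_model_iso (T : gsequent Σ -> Prop) (hT : geometric_theory T) (f : iso Σ S) :
  is_model T (idom f) -> is_model T (icod f).
Proof.
  intros hM σ hσ w hw hhyp.
  destruct (choice (fun x a => In x (sctx σ) -> imap f a (w x))) as [v hv].
  { intros x. destruct (classic (In x (sctx σ))) as [hx | hx].
    - destruct (imap_sur f (w x) (hw x hx)) as [a ha]. exists a. auto.
    - exists (w x). contradiction. }
  apply (sat_iso f (sconcl σ) v w); [intros x hx; apply hv, (hT σ hσ); auto |].
  apply (hM σ hσ); [intros x hx; exact (proj1 (imap_dom f _ _ (hv x hx))) |].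
  apply (sat_iso (iso_inv f) (shyp σ) w v); [| exact hhyp].
  intros x hx. apply hv, (hT σ hσ); auto.
Qed.

End Isomorphisms.

Section Avoidance.
Context {S : Type}.

Definition coinfinite (π : S -> S) : Prop :=
  exists c : nat -> S, injective c /\ forall n x, c n <> π x.

Lemma injective_eventually_notin (c : nat -> S) (l : list S) :
  injective c -> exists K, forall j, K <= j -> ~ In (c j) l.
Proof.
  intros hc. induction l as [| b l [K hK]]; [exists 0; simpl; auto |].
  destruct (classic (exists m, c m = b)) as [[m hm] | hb].
  - exists (max K (Datatypes.S m)). intros j hj [hjb | hjl].
    + subst b. apply hc in hjb. lia.
    + apply (hK j); [lia | exact hjl].
  - exists K. intros j hj [hjb | hjl]; [apply hb; eauto | exact (hK j hj hjl)].
Qed.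

(* Hilbert's hotel: send [e n] to [e (2 n)], freeing the points [e (2 n + 1)]. *)
Lemma coinfinite_injection (e : nat -> S) :
  injective e -> exists π, injective π /\ coinfinite π.
Proof.
  intros he.
  destruct (choice (fun x n => (exists m, x = e m) -> x = e n)) as [idx hidx].
  { intros x. destruct (classic (exists m, x = e m)) as [[m hm] | hx].
    - exists m. auto.
    - exists 0. contradiction. }
  pose (π x := if excluded_middle_informative (exists m, x = e m)
               then e (2 * idx x) else x).
  exists π. split.
  - intros x y. unfold π.
    destruct (excluded_middle_informative (exists m, x = e m)) as [hx | hx];
    destruct (excluded_middle_informative (exists m, y = e m)) as [hy | hy];
      intros hxy.
    + rewrite (hidx x hx), (hidx y hy). apply he in hxy. f_equal. lia.
    + exfalso. apply hy. eauto.
    + exfalso. apply hx. eauto.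
    + exact hxy.
  - exists (fun n => e (2 * n + 1)). split; [intros n m h; apply he in h; lia |].
    intros n x. unfold π.
    destruct (excluded_middle_informative (exists m, x = e m)) as [hx | hx].
    + intros h. apply he in h. lia.
    + intros h. apply hx. exists (2 * n + 1). congruence.
Qed.

Lemma coinfinite_avoid_cons (π : S -> S) (b : S) (l : list S) :
  injective π -> coinfinite π -> (forall x, ~ In (π x) l) ->
  exists π', injective π' /\ coinfinite π' /\ forall x, ~ In (π' x) (b :: l).
Proof.
  intros hπ [c [hc hcπ]] hl.
  destruct (classic (exists x0, π x0 = b)) as [[x0 hx0] | hb].
  - destruct (injective_eventually_notin c (b :: l) hc) as [j hj].
    specialize (hj j (le_n j)).
    pose (π' x := if excluded_middle_informative (x = x0) then c j else π x).
    exists π'. split; [| split].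
    + intros x y. unfold π'.
      destruct (excluded_middle_informative (x = x0)) as [hx | hx];
      destruct (excluded_middle_informative (y = x0)) as [hy | hy]; intros hxy.
      * congruence.
      * exfalso. exact (hcπ j y hxy).
      * exfalso. exact (hcπ j x (eq_sym hxy)).
      * exact (hπ x y hxy).
    + exists (fun n => c (n + j + 1)). split; [intros n m h; apply hc in h; lia |].
      intros n x. unfold π'. destruct (excluded_middle_informative (x = x0)).
      * intros h. apply hc in h. lia.
      * apply hcπ.
    + intros x. unfold π'. destruct (excluded_middle_informative (x = x0)) as [hx | hx];
        [exact hj |].
      intros [hxb | hxl]; [apply hx, hπ; congruence | exact (hl x hxl)].
  - exists π. split; [exact hπ | split; [exists c; auto |]].
    intros x [hxb | hxl]; [apply hb; eauto | exact (hl x hxl)].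
Qed.

Lemma injection_avoiding (e : nat -> S) (l : list S) :
  injective e -> exists π : S -> S, injective π /\ forall x, ~ In (π x) l.
Proof.
  intros he.
  enough (h : exists π, injective π /\ coinfinite π /\ forall x, ~ In (π x) l)
    by (destruct h as [π [hπ [_ hl]]]; eauto).
  induction l as [| b l [π [hπ [hc hl]]]].
  - destruct (coinfinite_injection e he) as [π [hπ hc]]. exists π. auto.
  - exact (coinfinite_avoid_cons π b l hπ hc hl).
Qed.

End Avoidance.

Section Transport.
Context {Σ : signature} {S : Type} (M : structure Σ S) (g : S -> S -> Prop).
Hypotheses (g_dom : forall x y, g x y -> sdom M x)
  (g_tot : forall x, sdom M x -> exists y, g x y)
  (g_inj : forall x x' y, g x y -> g x' y -> seqv M x x')
  (g_resp : forall x x' y, g x y -> seqv M x x' -> g x' y).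

Definition transport_eqv (y y' : S) : Prop :=
  exists x x', g x y /\ g x' y' /\ seqv M x x'.

Lemma transport_eqv_resp y y' x : transport_eqv y y' -> g x y -> g x y'.
Proof.
  intros [u [u' [hu [hu' huu']]]] hx. apply (g_resp u' x y' hu').
  apply (seqv_trans M u' u x); [apply seqv_sym; exact huu' | exact (g_inj u x y hu hx)].
Qed.

Definition transport : structure Σ S.
Proof.
  refine (Structure Σ S (fun y => exists x, g x y) transport_eqv
    (fun R yv => exists xv, (forall i, g (xv i) (yv i)) /\ srel M R xv)
    (fun f yv y => exists xv x, (forall i, g (xv i) (yv i)) /\ g x y /\ sfun M f xv x)
    _ _ _ _ _ _ _ _ _ _).
  - intros y y' [x [x' [hx [hx' _]]]]. split; eauto.
  - intros y [x hx]. exists x, x. repeat split; auto. apply seqv_refl, (g_dom x y hx).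
  - intros y y' [x [x' [hx [hx' hxx']]]]. exists x', x. repeat split; auto.
    apply seqv_sym; exact hxx'.
  - intros y y' y'' [x [x' [hx [hx' hxx']]]] [u [u' [hu [hu' huu']]]].
    exists x, u'. repeat split; auto.
    apply (seqv_trans M x u u'); [apply (seqv_trans M x x' u hxx'), (g_inj x' u y') |]; auto.
  - intros R yv [xv [h _]] i. eauto.
  - intros R yv yv' hyv [xv [h hR]]. exists xv. split; [| exact hR].
    intros i. exact (transport_eqv_resp _ _ _ (hyv i) (h i)).
  - intros f yv y [xv [x [h [hx _]]]]. split; eauto.
  - intros f yv yv' y y' hyv hy [xv [x [h [hx hf]]]]. exists xv, x. repeat split; auto.
    + intros i. exact (transport_eqv_resp _ _ _ (hyv i) (h i)).
    + exact (transport_eqv_resp _ _ _ hy hx).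
  - intros f yv hyv.
    destruct (choice (fun i x => g x (yv i)) hyv) as [xv hxv].
    destruct (sfun_tot M f xv (fun i => g_dom _ _ (hxv i))) as [x hx].
    destruct (g_tot x (proj2 (sfun_dom M f xv x hx))) as [y hy].
    exists y, xv, x. auto.
  - intros f yv y y' [xv [x [h [hx hf]]]] [xv' [x' [h' [hx' hf']]]].
    exists x, x'. repeat split; auto.
    apply (sfun_fun M f xv x x' hf).
    apply (sfun_inv M f xv' xv x' x' (fun i => g_inj _ _ _ (h' i) (h i))); [| exact hf'].
    apply seqv_refl, (g_dom x' y' hx').
Defined.

Definition transport_iso : iso Σ S.
Proof.
  refine (Iso Σ S M transport g _ _ _ _ _ _ _ _).
  - intros x y h. split; [exact (g_dom x y h) | exists x; exact h].
  - intros x x' y y' hx hy h. exact (transport_eqv_resp y y' x' hy (g_resp x x' y h hx)).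
  - exact g_tot.
  - intros x y y' h h'. exists x, x. repeat split; auto. apply seqv_refl, (g_dom x y h).
  - exact g_inj.
  - intros y h. exact h.
  - intros R xv yv h. split; [intros hR; exists xv; auto |].
    intros [xv' [h' hR]].
    exact (srel_inv M R xv' xv (fun i => g_inj _ _ _ (h' i) (h i)) hR).
  - intros f xv yv x y h hf [xv' [x' [h' [hx' hf']]]].
    apply (g_resp x' x y hx'), (sfun_fun M f xv x' x); [| exact hf].
    apply (sfun_inv M f xv' xv x' x' (fun i => g_inj _ _ _ (h' i) (h i))); [| exact hf'].
    apply seqv_refl, (g_dom x' y hx').
Defined.

End Transport.

Section Relabelling.
Context {Σ : signature} {S : Type} (M : structure Σ S) (labels : list (S * S)) (π : S -> S).
Hypotheses (π_inj : injective π) (π_fresh : forall x a, ~ In (a, π x) labels)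
  (labels_eqv : forall a a' b, In (a, b) labels -> In (a', b) labels -> seqv M a a').

Definition relabel (x y : S) : Prop :=
  sdom M x /\
  ((exists x', seqv M x x' /\ y = π x') \/ (exists a, In (a, y) labels /\ seqv M x a)).

Lemma relabel_inj x x' y : relabel x y -> relabel x' y -> seqv M x x'.
Proof.
  intros [_ [[u [hu ->]] | [a [ha hxa]]]] [_ [[u' [hu' hy]] | [a' [ha' hxa']]]].
  - apply π_inj in hy. subst u'.
    exact (seqv_trans M x u x' hu (seqv_sym M x' u hu')).
  - exfalso. exact (π_fresh u a' ha').
  - exfalso. subst y. exact (π_fresh u' a ha).
  - apply (seqv_trans M x a x' hxa), (seqv_trans M a a' x' (labels_eqv a a' y ha ha')).
    apply seqv_sym; exact hxa'.
Qed.

Lemma relabel_resp x x' y : relabel x y -> seqv M x x' -> relabel x' y.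
Proof.
  intros [_ [[u [hu E]] | [a [ha hxa]]]] h; split; try exact (proj2 (seqv_dom M _ _ h)).
  - left. exists u. split; [apply (seqv_trans M x' x u (seqv_sym M x x' h) hu) | exact E].
  - right. exists a. split; [exact ha | apply (seqv_trans M x' x a (seqv_sym M x x' h) hxa)].
Qed.

Definition relabel_iso : iso Σ S.
Proof.
  refine (transport_iso M relabel _ _ relabel_inj relabel_resp).
  - intros x y h. exact (proj1 h).
  - intros x h. exists (π x). split; [exact h |]. left. exists x. split; auto.
    apply seqv_refl, h.
Defined.

Lemma relabel_iso_labels a b : In (a, b) labels -> imap relabel_iso a b.
Proof.
  intros h. assert (ha : seqv M a a) by exact (labels_eqv a a b h h).
  split; [exact (proj1 (seqv_dom M a a ha)) |]. right. eauto.
Qed.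

End Relabelling.

Fixpoint fin_enum (n : nat) : list (Fin.t n) :=
  match n with
  | 0 => []
  | Datatypes.S m => Fin.F1 :: map Fin.FS (fin_enum m)
  end.

Lemma fin_enum_complete n (i : Fin.t n) : In i (fin_enum n).
Proof. induction i; simpl; [left; reflexivity | right; apply in_map; exact IHi]. Qed.

Definition fin_pairs {S} n (av bv : Fin.t n -> S) : list (S * S) :=
  map (fun i => (av i, bv i)) (fin_enum n).

Lemma In_fin_pairs {S} n (av bv : Fin.t n -> S) a b :
  In (a, b) (fin_pairs n av bv) <-> exists i, a = av i /\ b = bv i.
Proof.
  unfold fin_pairs. rewrite in_map_iff. split.
  - intros [i [h _]]. injection h. eauto.
  - intros [i [-> ->]]. exists i. split; [reflexivity | apply fin_enum_complete].
Qed.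

Section Neighbourhoods.
Context {Σ : signature} {S : Type}.

Record controls (f0 : iso Σ S) (conds : list (structure Σ S -> Prop))
    (labels : list (S * S)) (P : iso Σ S -> Prop) : Prop := {
  controls_subbasic : forall V, In V conds -> M_subbasic V;
  controls_conds : forall V, In V conds -> V (idom f0);
  controls_labels : forall a b, In (a, b) labels -> imap f0 a b;
  controls_spec : forall f, (forall V, In V conds -> V (idom f)) ->
    (forall a b, In (a, b) labels -> imap f a b) -> P f
}.

Definition controlled (f0 : iso Σ S) (P : iso Σ S -> Prop) : Prop :=
  exists conds labels, controls f0 conds labels P.

Lemma controlled_impl f0 (P Q : iso Σ S -> Prop) :
  controlled f0 P -> (forall f, P f -> Q f) -> controlled f0 Q.
Proof.
  intros [conds [labels [h1 h2 h3 h4]]] hPQ. exists conds, labels.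
  split; auto.
Qed.

Lemma controlled_and f0 (P Q : iso Σ S -> Prop) :
  controlled f0 P -> controlled f0 Q -> controlled f0 (fun f => P f /\ Q f).
Proof.
  intros [c [l [h1 h2 h3 h4]]] [c' [l' [h1' h2' h3' h4']]].
  exists (c ++ c'), (l ++ l'). split.
  - intros V hV. apply in_app_or in hV as [hV | hV]; [exact (h1 V hV) | exact (h1' V hV)].
  - intros V hV. apply in_app_or in hV as [hV | hV]; [exact (h2 V hV) | exact (h2' V hV)].
  - intros a b hab. apply in_app_or in hab as [hab | hab]; [exact (h3 a b hab) | exact (h3' a b hab)].
  - intros f hc hl. split; [apply h4 | apply h4'];
      intros; [apply hc | apply hl | apply hc | apply hl]; apply in_or_app; auto.
Qed.

Lemma controlled_Forall {X : Type} f0 (l : list X) (P : X -> iso Σ S -> Prop) :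
  (forall x, In x l -> controlled f0 (P x)) ->
  controlled f0 (fun f => forall x, In x l -> P x f).
Proof.
  induction l as [| x l IH]; intros hl.
  - exists [], []. split; simpl; tauto.
  - apply (controlled_impl _ _ _
      (controlled_and _ _ _ (hl x (or_introl eq_refl)) (IH (fun y hy => hl y (or_intror hy))))).
    intros f [hx hl'] y [<- | hy]; auto.
Qed.

Lemma controlled_generated {X : Type} (B : (X -> Prop) -> Prop) (h : iso Σ S -> X)
    f0 (U : X -> Prop) :
  (forall V, B V -> V (h f0) -> controlled f0 (fun f => V (h f))) ->
  generated_open B U -> U (h f0) -> controlled f0 (fun f => U (h f)).
Proof.
  intros hB hU hf0. destruct (hU _ hf0) as [l [hlB [hl0 hlU]]].
  apply (controlled_impl _ (fun f => forall V, In V l -> V (h f))); [| intros f hf; apply hlU, hf].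
  apply controlled_Forall. intros V hV. exact (hB V (hlB V hV) (hl0 V hV)).
Qed.

Lemma controlled_dom_subbasic f0 (V : structure Σ S -> Prop) :
  M_subbasic V -> V (idom f0) -> controlled f0 (fun f => V (idom f)).
Proof.
  intros hV h. exists [V], []. split; simpl; try tauto.
  - intros W [<- | []]. exact hV.
  - intros W [<- | []]. exact h.
  - intros f hf _. exact (hf V (or_introl eq_refl)).
Qed.

Lemma controlled_imap f0 a b :
  imap f0 a b -> controlled f0 (fun f => sdom (idom f) a /\ sdom (icod f) b /\ imap f a b).
Proof.
  intros hab. exists [], [(a, b)]. split; simpl; try tauto.
  - intros x y [h | []]. injection h as -> ->. exact hab.
  - intros f _ hl. assert (h : imap f a b) by (apply hl; left; reflexivity).
    destruct (imap_dom f a b h). auto.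
Qed.

Lemma controlled_cod_elem f0 b :
  sdom (icod f0) b -> controlled f0 (fun f => sdom (icod f) b).
Proof.
  intros hb. destruct (imap_sur f0 b hb) as [a hab].
  apply (controlled_impl _ _ _ (controlled_imap f0 a b hab)). tauto.
Qed.

Lemma controlled_cod_eqv f0 b b' :
  sdom (icod f0) b /\ sdom (icod f0) b' /\ seqv (icod f0) b b' ->
  controlled f0 (fun f => sdom (icod f) b /\ sdom (icod f) b' /\ seqv (icod f) b b').
Proof.
  intros [hb [hb' hbb']].
  destruct (imap_sur f0 b hb) as [a hab]. destruct (imap_sur f0 b' hb') as [a' hab'].
  apply (controlled_impl _ (fun f => (sdom (idom f) a /\ sdom (idom f) a' /\ seqv (idom f) a a')
    /\ imap f a b /\ imap f a' b')).
  - apply controlled_and; [| apply controlled_and].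
    + apply (controlled_dom_subbasic f0 (fun M => sdom M a /\ sdom M a' /\ seqv M a a'));
        [constructor |].
      repeat split; [exact (proj1 (imap_dom f0 a b hab)) | exact (proj1 (imap_dom f0 a' b' hab')) |].
      exact (proj2 (imap_seqv f0 a a' b b' hab hab') hbb').
    + apply (controlled_impl _ _ _ (controlled_imap f0 a b hab)). tauto.
    + apply (controlled_impl _ _ _ (controlled_imap f0 a' b' hab')). tauto.
  - intros f [[_ [_ haa']] [h h']]. repeat split;
      [exact (proj2 (imap_dom f a b h)) | exact (proj2 (imap_dom f a' b' h')) |].
    exact (proj1 (imap_seqv f a a' b b' h h') haa').
Qed.

Lemma controlled_fin_pairs f0 n (av bv : Fin.t n -> S) :
  (forall i, imap f0 (av i) (bv i)) -> controlled f0 (fun f => forall i, imap f (av i) (bv i)).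
Proof.
  intros hv. exists [], (fin_pairs n av bv). split; simpl; try tauto.
  - intros a b h. apply In_fin_pairs in h as [i [-> ->]]. apply hv.
  - intros f _ hl i. apply hl, In_fin_pairs. eauto.
Qed.

Lemma controlled_cod_rel f0 R bv :
  srel (icod f0) R bv -> controlled f0 (fun f => srel (icod f) R bv).
Proof.
  intros hR.
  destruct (choice (fun i a => imap f0 a (bv i))
    (fun i => imap_sur f0 (bv i) (srel_dom _ R bv hR i))) as [av hv].
  apply (controlled_impl _ (fun f => srel (idom f) R av /\ forall i, imap f (av i) (bv i))).
  - apply controlled_and; [| exact (controlled_fin_pairs f0 _ av bv hv)].
    apply (controlled_dom_subbasic f0 (fun M => srel M R av)); [constructor |].
    exact (proj2 (imap_rel f0 R av bv hv) hR).
  - intros f [hR' hv']. exact (proj1 (imap_rel f R av bv hv') hR').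
Qed.

Lemma controlled_cod_fun f0 g bv c :
  sfun (icod f0) g bv c -> controlled f0 (fun f => sfun (icod f) g bv c).
Proof.
  intros hg. destruct (sfun_dom _ g bv c hg) as [hbv hc].
  destruct (choice (fun i a => imap f0 a (bv i)) (fun i => imap_sur f0 (bv i) (hbv i)))
    as [av hv].
  destruct (imap_sur f0 c hc) as [a hac].
  apply (controlled_impl _ (fun f => sfun (idom f) g av a /\
    (forall i, imap f (av i) (bv i)) /\ imap f a c)).
  - apply controlled_and; [| apply controlled_and].
    + apply (controlled_dom_subbasic f0 (fun M => sfun M g av a)); [constructor |].
      exact (proj2 (imap_sfun f0 g av bv a c hv hac) hg).
    + exact (controlled_fin_pairs f0 _ av bv hv).
    + apply (controlled_impl _ _ _ (controlled_imap f0 a c hac)). tauto.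
  - intros f [hg' [hv' hac']]. exact (proj1 (imap_sfun f g av bv a c hv' hac') hg').
Qed.

Lemma controlled_cod_subbasic f0 (V : structure Σ S -> Prop) :
  M_subbasic V -> V (icod f0) -> controlled f0 (fun f => V (icod f)).
Proof.
  destruct 1.
  - apply controlled_cod_elem.
  - apply controlled_cod_rel.
  - apply controlled_cod_eqv.
  - apply controlled_cod_fun.
Qed.

Lemma controlled_I_open f0 (V : iso Σ S -> Prop) : I_open V -> V f0 -> controlled f0 V.
Proof.
  apply (controlled_generated I_subbasic (fun f => f)).
  intros W hW hf0. destruct hW as [U hU | U hU | a b].
  - exact (controlled_generated M_subbasic idom f0 U (controlled_dom_subbasic f0) hU hf0).
  - exact (controlled_generated M_subbasic icod f0 U (controlled_cod_subbasic f0) hU hf0).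
  - exact (controlled_imap f0 a b (proj2 (proj2 hf0))).
Qed.

End Neighbourhoods.

Section Openness.
Context {Σ : signature} {S : Type}.

Definition label_clashes (labels : list (S * S)) : list ((S * S) * (S * S)) :=
  filter (fun pq => if excluded_middle_informative (snd (fst pq) = snd (snd pq))
                    then true else false)
    (list_prod labels labels).

Definition label_eqs (labels : list (S * S)) : list (structure Σ S -> Prop) :=
  map (fun pq M => sdom M (fst (fst pq)) /\ sdom M (fst (snd pq)) /\
                   seqv M (fst (fst pq)) (fst (snd pq)))
    (label_clashes labels).

Lemma In_label_clashes labels p q :
  In (p, q) (label_clashes labels) <-> In p labels /\ In q labels /\ snd p = snd q.
Proof.
  unfold label_clashes. rewrite filter_In, in_prod_iff. simpl.
  destruct (excluded_middle_informative (snd p = snd q)); intuition discriminate.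
Qed.

Lemma label_eqs_subbasic labels V : In V (label_eqs labels) -> M_subbasic V.
Proof. unfold label_eqs. rewrite in_map_iff. intros [pq [<- _]]. constructor. Qed.

Lemma label_eqs_imap (f : iso Σ S) labels :
  (forall a b, In (a, b) labels -> imap f a b) ->
  forall V, In V (label_eqs labels) -> V (idom f).
Proof.
  intros hl V. unfold label_eqs. rewrite in_map_iff.
  intros [[[a b] [a' b']] [<- hpq]]. apply In_label_clashes in hpq as [hab [hab' E]].
  simpl in *. subst b'. apply hl in hab, hab'.
  split; [exact (proj1 (imap_dom f a b hab)) |].
  split; [exact (proj1 (imap_dom f a' b hab')) | exact (imap_inj f a a' b hab hab')].
Qed.

Lemma label_eqs_seqv (M : structure Σ S) labels :
  (forall V, In V (label_eqs labels) -> V M) ->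
  forall a a' b, In (a, b) labels -> In (a', b) labels -> seqv M a a'.
Proof.
  intros hM a a' b hab hab'.
  refine (proj2 (proj2 (hM _ (in_map _ _ ((a, b), (a', b)) _)))).
  apply In_label_clashes. auto.
Qed.

(* Any [M] satisfying [conds] and [label_eqs labels] is relabelled into a structure that
   realises the labels; the unlabelled elements need fresh names, hence an infinite [S]. *)
Lemma dom_image_open (e : nat -> S) (V : iso Σ S -> Prop) :
  injective e -> I_open V -> M_open (fun M => exists f, V f /\ idom f = M).
Proof.
  intros he hV M0 [f0 [hf0 <-]].
  destruct (controlled_I_open f0 V hV hf0) as [conds [labels [hsub hconds hlabels hspec]]].
  exists (conds ++ label_eqs labels). split; [| split].
  - intros W hW. apply in_app_or in hW as [hW | hW];
      [exact (hsub W hW) | exact (label_eqs_subbasic labels W hW)].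
  - intros W hW. apply in_app_or in hW as [hW | hW];
      [exact (hconds W hW) | exact (label_eqs_imap f0 labels hlabels W hW)].
  - intros M hM.
    destruct (injection_avoiding e (map snd labels) he) as [π [hπ hfresh]].
    assert (hπ_fresh : forall x a, ~ In (a, π x) labels)
      by (intros x a h; exact (hfresh x (in_map snd _ _ h))).
    assert (heqs : forall a a' b, In (a, b) labels -> In (a', b) labels -> seqv M a a')
      by (apply label_eqs_seqv; intros W hW; apply hM, in_or_app; auto).
    exists (relabel_iso M labels π hπ hπ_fresh heqs). split; [| reflexivity].
    apply hspec; [intros W hW; apply hM, in_or_app; auto |].
    apply relabel_iso_labels.
Qed.

Lemma generated_open_ext {X : Type} (B : (X -> Prop) -> Prop) (U U' : X -> Prop) :
  (forall x, U x <-> U' x) -> generated_open B U -> generated_open B U'.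
Proof.
  intros hUU' hU x hx. destruct (hU x (proj2 (hUU' x) hx)) as [l [h1 [h2 h3]]].
  exists l. split; [exact h1 | split; [exact h2 | intros y hy; apply hUU', h3, hy]].
Qed.

Lemma generated_open_preimage {X : Type} (B : (X -> Prop) -> Prop) (h : X -> X) U :
  (forall W, B W -> B (fun x => W (h x))) ->
  generated_open B U -> generated_open B (fun x => U (h x)).
Proof.
  intros hB hU x hx. destruct (hU (h x) hx) as [l [h1 [h2 h3]]].
  exists (map (fun W x => W (h x)) l). split; [| split].
  - intros W' hW'. apply in_map_iff in hW' as [W [<- hW]]. exact (hB W (h1 W hW)).
  - intros W' hW'. apply in_map_iff in hW' as [W [<- hW]]. exact (h2 W hW).
  - intros y hy. apply h3. intros W hW. exact (hy _ (in_map (fun W x => W (h x)) l W hW)).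
Qed.

Lemma I_subbasic_inv (W : iso Σ S -> Prop) :
  I_subbasic W -> I_subbasic (fun f => W (iso_inv f)).
Proof.
  destruct 1 as [U hU | U hU | a b].
  - exact (isb_cod Σ S U hU).
  - exact (isb_dom Σ S U hU).
  - replace (fun f => sdom (idom (iso_inv f)) a /\ sdom (icod (iso_inv f)) b /\
                      imap (iso_inv f) a b)
      with (fun f : iso Σ S => sdom (idom f) b /\ sdom (icod f) a /\ imap f b a);
      [constructor |].
    apply functional_extensionality. intros f. apply propositional_extensionality.
    simpl. tauto.
Qed.

Lemma cod_image_open (e : nat -> S) (V : iso Σ S -> Prop) :
  injective e -> I_open V -> M_open (fun M => exists f, V f /\ icod f = M).
Proof.
  intros he hV.
  apply (generated_open_ext _ (fun M => exists f, V (iso_inv f) /\ idom f = M)).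
  - intros M. split; intros [f [hf <-]]; exists (iso_inv f);
      [| rewrite iso_inv_involutive]; auto.
  - exact (dom_image_open e _ he (generated_open_preimage _ iso_inv V I_subbasic_inv hV)).
Qed.

Lemma open_map_of_image {T : gsequent Σ -> Prop} (side : iso Σ S -> structure Σ S)
    (g : IT Σ S T -> MT Σ S T) :
  (forall f, proj1_sig (g f) = side (proj1_sig f)) ->
  (forall f, is_model T (side f) -> is_model T (idom f) /\ is_model T (icod f)) ->
  (forall V, I_open V -> M_open (fun M => exists f, V f /\ side f = M)) ->
  open_map g.
Proof.
  intros hg hside himage U [V [hV hUV]].
  exists (fun M => exists f, V f /\ side f = M). split; [exact (himage V hV) |].
  intros [M hM]. simpl. split.
  - intros [f [hf E]]. exists (proj1_sig f). split; [apply hUV, hf |].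
    rewrite <- hg, E. reflexivity.
  - intros [f [hf E]]. subst M.
    exists (exist _ f (hside f hM)). split; [apply hUV, hf |].
    apply eq_sig_hprop; [intros; apply proof_irrelevance | apply hg].
Qed.

End Openness.

Theorem proposition2p8 (Σ : signature) (κ S : Type)
  (hκ_inf : exists e : nat -> κ, injective e)
  (hκ_sig : exists e : Rel Σ + Fun Σ -> κ, injective e)
  (hS : exists e : κ -> S, injective e)
  (T : gsequent Σ -> Prop) (hT : geometric_theory T) :
  open_map (@dT Σ S T) /\ open_map (@cT Σ S T).
Proof.
  destruct hκ_inf as [e1 he1], hS as [e2 he2].
  assert (he : injective (fun n => e2 (e1 n))) by (intros m n h; apply he1, he2, h).
  split.
  - apply (open_map_of_image idom); [reflexivity | |].
    + intros f hf. split; [exact hf | exact (is_model_iso T hT f hf)].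
    + intros V. exact (dom_image_open _ V he).
  - apply (open_map_of_image icod); [reflexivity | |].
    + intros f hf. split; [exact (is_model_iso T hT (iso_inv f) hf) | exact hf].
    + intros V. exact (cod_image_open _ V he).
Qed.
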